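(* Assume $T_B\colon\mathcal D(T_B)\to Y_B$ is bijective, and let $P_n\colon X\to X(n)$ be the projection associated to the decomposition $X=X(n)\oplus Z(n)$ (so $\ker P_n=Z(n)$). Then for each $n\in\mathbb Z$ the operator $A_n|_{\ker P_n}\colon\ker P_n\to\ker P_{n+1}$ is invertible (bijective).
   Context: $B$ is an admissible Banach sequence space: a complete normed space $B$ of real sequences $(s_n)_{n\in\mathbb Z}$ such that $\mathbf{s}'\in B$, $|s_n|\le|s'_n|$ for all $n$ imply $\mathbf{s}\in B$, $\|\mathbf{s}\|_B\le\|\mathbf{s}'\|_B$; $\chi_{\{n\}}\in B$ with $\|\chi_{\{n\}}\|_B>0$ for all $n$; and shifts $(s_{n+m})_n$ of elements of $B$ are in $B$ with norm at most $N\|\mathbf{s}\|_B$ for a fixed $N>0$. $X$ is a Banach space with norms $\|\cdot\|_n$ ($n\in\mathbb Z$) each equivalent to its norm; $(A_m)_{m\in\mathbb Z}$ are bounded linear operators on $X$. $Y_B$ is the Banach space of sequences $\mathbf{x}=(x_n)_{n\in\mathbb Z}$ in $X$ with $(\|x_n\|_n)_n\in B$, normed by $\|(\|x_n\|_n)_n\|_B$; $(T_B\mathbf{x})_n=x_n-A_{n-1}x_{n-1}$ on $\mathcal D(T_B)=\{\mathbf{x}\in Y_B:T_B\mathbf{x}\in Y_B\}$. For $n\in\mathbb Z$, $X(n)$ is the set of $x\in X$ for which there is $\mathbf{x}=(x_m)_m\in Y_B$ with $x_n=x$ and $x_m=A_{m-1}x_{m-1}$ for all $m>n$; $Z(n)$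 is the set of $x\in X$ for which there is $\mathbf{z}=(z_m)_m\in Y_B$ with $z_n=x$ and $z_m=A_{m-1}z_{m-1}$ for all $m\le n$. When $T_B$ is bijective, $X=X(n)\oplus Z(n)$ for every $n$. *)

From Stdlib Require Import Reals ZArith.
Open Scope R_scope.

Definition is_vector_space {X : Type} (zero : X) (add : X -> X -> X)
  (opp : X -> X) (scal : R -> X -> X) : Prop :=
  (forall x y z, add x (add y z) = add (add x y) z) /\
  (forall x y, add x y = add y x) /\
  (forall x, add x zero = x) /\
  (forall x, add x (opp x) = zero) /\
  (forall a b x, scal a (scal b x) = scal (a * b) x) /\
  (forall x, scal 1 x = x) /\
  (forall a x y, scal a (add x y) = add (scal a x) (scal a y)) /\
  (forall a b x, scal (a + b) x = add (scal a x) (scal b x)).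

Definition is_norm {X : Type} (zero : X) (add : X -> X -> X)
  (scal : R -> X -> X) (nrm : X -> R) : Prop :=
  (forall x, 0 <= nrm x) /\
  (forall x, nrm x = 0 -> x = zero) /\
  (forall a x, nrm (scal a x) = Rabs a * nrm x) /\
  (forall x y, nrm (add x y) <= nrm x + nrm y).

Definition is_complete {X : Type} (add : X -> X -> X) (opp : X -> X)
  (nrm : X -> R) : Prop :=
  forall u : nat -> X,
    (forall eps, 0 < eps -> exists N, forall p q, (N <= p)%nat -> (N <= q)%nat ->
        nrm (add (u p) (opp (u q))) < eps) ->
    exists l, forall eps, 0 < eps -> exists N, forall p, (N <= p)%nat ->
        nrm (add (u p) (opp l)) < eps.

Definition is_banach {X : Type} (zero : X) (add : X -> X -> X) (opp : X -> X)
  (scal : R -> X -> X) (nrm : X -> R) : Prop :=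
  is_vector_space zero add opp scal /\ is_norm zero add scal nrm /\
  is_complete add opp nrm.

Definition equiv_norms {X : Type} (n1 n2 : X -> R) : Prop :=
  exists c C, 0 < c /\ 0 < C /\ forall x, c * n1 x <= n2 x /\ n2 x <= C * n1 x.

Definition is_bounded_linear {X : Type} (add : X -> X -> X)
  (scal : R -> X -> X) (nrm : X -> R) (A : X -> X) : Prop :=
  (forall x y, A (add x y) = add (A x) (A y)) /\
  (forall a x, A (scal a x) = scal a (A x)) /\
  (exists C, forall x, nrm (A x) <= C * nrm x).

(* B is the set {s : Z -> R | inB s} with norm normB (pointwise operations). *)
Definition chi (n : Z) : Z -> R := fun m => if Z.eq_dec m n then 1 else 0.

Definition is_banach_seq_space (inB : (Z -> R) -> Prop) (normB : (Z -> R) -> R) : Prop :=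
  inB (fun _ => 0) /\
  (forall s t, inB s -> inB t -> inB (fun n => s n + t n)) /\
  (forall a s, inB s -> inB (fun n => a * s n)) /\
  (forall s, inB s -> 0 <= normB s) /\
  (forall s, inB s -> normB s = 0 -> forall n, s n = 0) /\
  (forall a s, inB s -> normB (fun n => a * s n) = Rabs a * normB s) /\
  (forall s t, inB s -> inB t -> normB (fun n => s n + t n) <= normB s + normB t) /\
  (forall u : nat -> Z -> R, (forall k, inB (u k)) ->
    (forall eps, 0 < eps -> exists N, forall p q, (N <= p)%nat -> (N <= q)%nat ->
        normB (fun n => u p n - u q n) < eps) ->
    exists l, inB l /\ forall eps, 0 < eps -> exists N, forall p, (N <= p)%nat ->
        normB (fun n => u p n - l n) < eps).

Definition is_admissible (inB : (Z -> R) -> Prop) (normB : (Z -> R) -> R) : Prop :=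
  is_banach_seq_space inB normB /\
  (forall s s', inB s' -> (forall n, Rabs (s n) <= Rabs (s' n)) ->
     inB s /\ normB s <= normB s') /\
  (forall n, inB (chi n) /\ 0 < normB (chi n)) /\
  (exists N, 0 < N /\ forall s m, inB s ->
     inB (fun n => s (n + m)%Z) /\ normB (fun n => s (n + m)%Z) <= N * normB s).

Section Seq.
Context {X : Type} (add : X -> X -> X) (opp : X -> X)
  (nrms : Z -> X -> R) (A : Z -> X -> X) (inB : (Z -> R) -> Prop).

Definition inYB (x : Z -> X) : Prop := inB (fun n => nrms n (x n)).

Definition TB (x : Z -> X) : Z -> X :=
  fun n => add (x n) (opp (A (n - 1)%Z (x (n - 1)%Z))).

Definition inDomTB (x : Z -> X) : Prop := inYB x /\ inYB (TB x).

Definition TB_bijective : Prop :=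
  (forall x1 x2, inDomTB x1 -> inDomTB x2 -> (forall n, TB x1 n = TB x2 n) ->
     forall n, x1 n = x2 n) /\
  (forall y, inYB y -> exists x, inDomTB x /\ forall n, TB x n = y n).

Definition Xn (n : Z) (x : X) : Prop :=
  exists xs, inYB xs /\ xs n = x /\
    forall m, (n < m)%Z -> xs m = A (m - 1)%Z (xs (m - 1)%Z).

Definition Zn (n : Z) (x : X) : Prop :=
  exists zs, inYB zs /\ zs n = x /\
    forall m, (m <= n)%Z -> zs m = A (m - 1)%Z (zs (m - 1)%Z).
End Seq.

From Stdlib Require Import Reals ZArith Lra Lia.
Open Scope R_scope.

(* Z(n) consists of the endpoints of backward orbits lying in Y_B.  Appending
   [A_n x] to such an orbit, or dropping its last term, moves between Z(n) and
   Z(n+1), which gives that A_n maps Z(n) onto Z(n+1).  For injectivity, cut a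
   backward orbit ending at x after index n: the result lies in D(T_B) and T_B
   sends it to the sequence that is -A_n x at n+1 and zero elsewhere, so
   A_n x = A_n y forces the two cut orbits, hence x and y, to coincide. *)

Section VectorSpace.
Context {X : Type} (zero : X) (add : X -> X -> X) (opp : X -> X) (scal : R -> X -> X).
Hypothesis hV : is_vector_space zero add opp scal.

Lemma scal0_l (v : X) : scal 0 v = zero.
Proof.
  destruct hV as [hassoc [_ [hz [hopp [_ [_ [_ hdist]]]]]]].
  assert (Hu : scal 0 v = add (scal 0 v) (scal 0 v)).
  { rewrite <- hdist. f_equal. ring. }
  transitivity (add (add (scal 0 v) (scal 0 v)) (opp (scal 0 v))).
  - rewrite <- hassoc, hopp, hz. reflexivity.
  - rewrite <- Hu. apply hopp.
Qed.

Lemma add0l (v : X) : add zero v = v.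
Proof. destruct hV as [_ [hcomm [hz _]]]. rewrite hcomm. apply hz. Qed.

Lemma norm_zero (nrm : X -> R) : is_norm zero add scal nrm -> nrm zero = 0.
Proof.
  intros [_ [_ [hhom _]]].
  rewrite <- (scal0_l zero), hhom, Rabs_R0. ring.
Qed.

Lemma scalable_zero (f : X -> X) :
  (forall a x, f (scal a x) = scal a (f x)) -> f zero = zero.
Proof. intro hf. rewrite <- (scal0_l zero), hf, !scal0_l. reflexivity. Qed.

End VectorSpace.

Section Admissible.
Variables (inB : (Z -> R) -> Prop) (normB : (Z -> R) -> R).
Hypothesis hB : is_admissible inB normB.

Lemma inB0 : inB (fun _ => 0).
Proof. destruct hB as [[h0 _] _]. exact h0. Qed.

Lemma inB_dominated (s t : Z -> R) :
  inB t -> (forall n, Rabs (s n) <= Rabs (t n)) -> inB s.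
Proof. destruct hB as [_ [hsolid _]]. intros Ht Hst. exact (proj1 (hsolid s t Ht Hst)). Qed.

Lemma inB_update (s : Z -> R) (k : Z) (c : R) :
  inB s -> inB (fun m => if Z.eq_dec m k then c else s m).
Proof.
  destruct hB as [[_ [hadd [hscal _]]] [_ [hchi _]]].
  intro Hs.
  assert (Habs : inB (fun m => Rabs (s m))).
  { apply (inB_dominated _ s Hs). intro m. rewrite Rabs_Rabsolu. apply Rle_refl. }
  apply (inB_dominated _ (fun m => Rabs (s m) + Rabs c * chi k m)).
  { apply hadd; [exact Habs|]. apply hscal, hchi. }
  intro m. unfold chi. pose proof (Rabs_pos (s m)). pose proof (Rabs_pos c).
  destruct (Z.eq_dec m k); rewrite (Rabs_pos_eq (_ + _)); lra.
Qed.

End Admissible.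

Section BackwardOrbits.
Context {X : Type} (zero : X) (add : X -> X -> X) (opp : X -> X) (scal : R -> X -> X)
  (nrms : Z -> X -> R) (A : Z -> X -> X)
  (inB : (Z -> R) -> Prop) (normB : (Z -> R) -> R).
Hypothesis hV : is_vector_space zero add opp scal.
Hypothesis hnrms : forall k, is_norm zero add scal (nrms k).
Hypothesis hA : forall k a x, A k (scal a x) = scal a (A k x).
Hypothesis hB : is_admissible inB normB.

Let YB := inYB nrms inB.
Let T := TB add opp A.

Definition backward_orbit (n : Z) (zs : Z -> X) : Prop :=
  forall m, (m <= n)%Z -> zs m = A (m - 1)%Z (zs (m - 1)%Z).

Definition truncate_after (n : Z) (zs : Z -> X) : Z -> X :=
  fun m => if Z_le_dec m n then zs m else zero.

Lemma inYB_dominated (xs ys : Z -> X) :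
  YB ys -> (forall m, nrms m (xs m) <= nrms m (ys m)) -> YB xs.
Proof.
  intros Hys Hle. apply (inB_dominated inB normB hB _ _ Hys). intro m.
  destruct (hnrms m) as [hpos _]. rewrite !Rabs_pos_eq by apply hpos. apply Hle.
Qed.

Lemma inYB_zero : YB (fun _ => zero).
Proof.
  apply (inB_dominated inB normB hB _ _ (inB0 inB normB hB)). intro m.
  rewrite (norm_zero zero add opp scal hV _ (hnrms m)). apply Rle_refl.
Qed.

Lemma inYB_update (xs : Z -> X) (k : Z) (v : X) :
  YB xs -> YB (fun m => if Z.eq_dec m k then v else xs m).
Proof.
  intro Hxs.
  apply (inB_dominated inB normB hB _ _ (inB_update inB normB hB _ k (nrms k v) Hxs)).
  intro m. destruct (Z.eq_dec m k) as [->|]; apply Rle_refl.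
Qed.

Lemma inYB_truncate_after (n : Z) (zs : Z -> X) : YB zs -> YB (truncate_after n zs).
Proof.
  intro Hzs. apply (inYB_dominated _ _ Hzs). intro m. unfold truncate_after.
  destruct (Z_le_dec m n); [apply Rle_refl|].
  rewrite (norm_zero zero add opp scal hV _ (hnrms m)). apply (hnrms m).
Qed.

Lemma TB_truncate_after (n : Z) (zs : Z -> X) : backward_orbit n zs ->
  forall k, T (truncate_after n zs) k =
            if Z.eq_dec k (n + 1) then opp (A n (zs n)) else zero.
Proof.
  destruct hV as [_ [_ [_ [hopp _]]]].
  intros Horb k. unfold T, TB, truncate_after.
  destruct (Z.eq_dec k (n + 1)) as [->|Hk].
  - replace (n + 1 - 1)%Z with n by ring.
    destruct (Z_le_dec (n + 1) n); [lia|]. destruct (Z_le_dec n n); [|lia].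
    apply (add0l zero add opp scal hV).
  - destruct (Z_le_dec k n); destruct (Z_le_dec (k - 1) n); try lia.
    + rewrite <- Horb by lia. apply hopp.
    + rewrite (scalable_zero zero add opp scal hV (A (k - 1)%Z) (hA _)). apply hopp.
Qed.

Lemma inDomTB_truncate_after (n : Z) (zs : Z -> X) :
  YB zs -> backward_orbit n zs -> inDomTB add opp nrms A inB (truncate_after n zs).
Proof.
  intros Hzs Horb. split; [exact (inYB_truncate_after n zs Hzs)|].
  apply (inYB_dominated _ (fun m => if Z.eq_dec m (n + 1) then opp (A n (zs n)) else zero)).
  - apply inYB_update, inYB_zero.
  - intro m. fold T. rewrite (TB_truncate_after n zs Horb). apply Rle_refl.
Qed.

Lemma A_maps_Zn (n : Z) (x : X) : Zn nrms A inB n x -> Zn nrms A inB (n + 1) (A n x).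
Proof.
  intros [zs [Hzs [Hn Horb]]].
  exists (fun m => if Z.eq_dec m (n + 1) then A n x else zs m).
  split; [|split].
  - apply inYB_update, Hzs.
  - destruct (Z.eq_dec (n + 1) (n + 1)); [reflexivity|lia].
  - intros m Hm. destruct (Z.eq_dec m (n + 1)) as [->|].
    + replace (n + 1 - 1)%Z with n by ring.
      destruct (Z.eq_dec n (n + 1)); [lia|]. rewrite Hn. reflexivity.
    + destruct (Z.eq_dec (m - 1) (n + 1)); [lia|]. apply Horb. lia.
Qed.

Lemma A_Zn_surjective (n : Z) (y : X) :
  Zn nrms A inB (n + 1) y -> exists x, Zn nrms A inB n x /\ A n x = y.
Proof.
  intros [zs [Hzs [Hn Horb]]]. exists (zs n). split.
  - exists zs. repeat split; [exact Hzs|]. intros m Hm. apply Horb. lia.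
  - rewrite <- Hn, (Horb (n + 1)%Z) by lia. replace (n + 1 - 1)%Z with n by ring.
    reflexivity.
Qed.

Lemma A_Zn_injective : TB_bijective add opp nrms A inB ->
  forall n x y, Zn nrms A inB n x -> Zn nrms A inB n y -> A n x = A n y -> x = y.
Proof.
  intros [hinj _] n x y [zx [Hzx [Hx Horbx]]] [zy [Hzy [Hy Horby]]] HA.
  assert (Htrunc := hinj _ _ (inDomTB_truncate_after n zx Hzx Horbx)
                         (inDomTB_truncate_after n zy Hzy Horby)).
  assert (Hn : truncate_after n zx n = truncate_after n zy n).
  { apply Htrunc. intro k. fold T.
    rewrite (TB_truncate_after n zx Horbx), (TB_truncate_after n zy Horby), Hx, Hy, HA.
    reflexivity. }
  unfold truncate_after in Hn. destruct (Z_le_dec n n); [|lia].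
  rewrite <- Hx, <- Hy. exact Hn.
Qed.

End BackwardOrbits.

Theorem lemma3p7
  (X : Type) (zero : X) (add : X -> X -> X) (opp : X -> X) (scal : R -> X -> X)
  (nrm : X -> R) (nrms : Z -> X -> R) (A : Z -> X -> X)
  (inB : (Z -> R) -> Prop) (normB : (Z -> R) -> R)
  (hX : is_banach zero add opp scal nrm)
  (hnrms : forall n, is_norm zero add scal (nrms n) /\ equiv_norms nrm (nrms n))
  (hA : forall m, is_bounded_linear add scal nrm (A m))
  (hB : is_admissible inB normB)
  (hT : TB_bijective add opp nrms A inB) :
  forall n : Z,
    (forall x, Zn nrms A inB n x -> Zn nrms A inB (n + 1)%Z (A n x)) /\
    (forall x y, Zn nrms A inB n x -> Zn nrms A inB n y -> A n x = A n y -> x = y) /\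
    (forall y, Zn nrms A inB (n + 1)%Z y -> exists x, Zn nrms A inB n x /\ A n x = y).
Proof.
  intro n.
  destruct hX as [hV _].
  assert (hnorm : forall k, is_norm zero add scal (nrms k)) by apply hnrms.
  assert (hscal : forall k a x, A k (scal a x) = scal a (A k x)) by apply hA.
  split; [|split].
  - apply (A_maps_Zn nrms A inB normB hB).
  - apply (A_Zn_injective zero add opp scal nrms A inB normB hV hnorm hscal hB hT).
  - apply A_Zn_surjective.
Qed.
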